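(* Let $n\geq 3$ and let $A=(a_{ij})\in\mathcal{M}_{n}(\mathbb{Z})$ with $\det(A)\neq 0$. Let $\Lambda=\{Az: z\in\mathbb{Z}^n\}$ be the lattice generated by the columns of $A$, and let $\mathcal{F}_A$ be its set of $A$-feasible lattice vectors. Let $b=\max\{|a_{ij}| : 1\leq i,j\leq n\}$. If $\lambda=Az\in\mathcal{F}_A$ with $z=(z_1,\ldots,z_n)\in\mathbb{Z}^n$, then $\log(|z_i|)\leq n(\log(n)+\log(b))$ for all $1\leq i\leq n$.
   Context: Logarithms are in base $2$. $\|\cdot\|$ is the Euclidean norm, $d(x,y)=\|x-y\|$, and $d(x,\Lambda)=\min_{\lambda\in\Lambda}d(x,\lambda)$. The fundamental parallelepiped of $\Lambda$ with respect to $A$ is $\mathcal{P}_A=\{Ay : y\in[0,1)^n\}$. A lattice vector $\lambda\in\Lambda$ is $A$-feasible if there exists $x\in\mathcal{P}_A$ with $d(\lambda,x)=d(x,\Lambda)$; $\mathcal{F}_A$ is the set of $A$-feasible lattice vectors. *)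

From HB Require Import structures.
From mathcomp Require Import all_boot all_order all_algebra.
From mathcomp Require Import all_classical all_reals.
From mathcomp Require Import exp.
Set Implicit Arguments. Unset Strict Implicit. Unset Printing Implicit Defensive.
Import Order.TTheory GRing.Theory Num.Theory.
Local Open Scope ring_scope.

(* base-2 logarithm (ln 0 = 0 in mathcomp-analysis) *)
Definition log2 {R : realType} (x : R) : R := ln x / ln 2.

Definition dist {R : realType} {n : nat} (x y : 'cV[R]_n) : R :=
  Num.sqrt (\sum_(i < n) (x i 0 - y i 0) ^+ 2).

Definition realmx {R : realType} {m n : nat} (A : 'M[int]_(m, n)) : 'M[R]_(m, n) :=
  map_mx (fun a : int => (a%:~R : R)) A.

Definition latvec {R : realType} {n : nat} (A : 'M[int]_n) (z : 'cV[int]_n) : 'cV[R]_n :=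
  realmx A *m realmx z.

Definition in_fund_par {R : realType} {n : nat} (A : 'M[int]_n) (x : 'cV[R]_n) : Prop :=
  exists y : 'cV[R]_n, (forall i, 0 <= y i 0 < 1) /\ x = realmx A *m y.

(* lam is A-feasible: lam is in the lattice and there is x in P_A with
   d(lam, x) = d(x, Lambda) = min over lattice vectors *)
Definition feasible {R : realType} {n : nat} (A : 'M[int]_n) (lam : 'cV[R]_n) : Prop :=
  (exists z : 'cV[int]_n, lam = latvec A z) /\
  exists x : 'cV[R]_n, in_fund_par A x /\
    forall z' : 'cV[int]_n, dist lam x <= dist (latvec A z') x.

Definition maxabs {n : nat} (A : 'M[int]_n) : int :=
  \big[Num.max/0]_(ij : 'I_n * 'I_n) `|A ij.1 ij.2|.

From Pilot Require Import Defs.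
From HB Require Import structures.
From mathcomp Require Import all_boot all_order all_algebra.
From mathcomp Require Import all_classical all_reals.
From mathcomp Require Import exp.
From mathcomp Require Import perm ring lra.
Set Implicit Arguments. Unset Strict Implicit. Unset Printing Implicit Defensive.
Import Order.TTheory GRing.Theory Num.Theory.
Local Open Scope ring_scope.

(* Let lambda = A z be feasible, witnessed by x = A y with y in [0,1)^n.  As 0
   is a lattice point, |lambda - x| <= |x| <= n^(3/2) b, so the residual
   w = lambda - x = A (z - y) has l1-norm at most n^2 b.  Cramer's rule
   det(A) (z - y) = adj(A) w, with |det A| >= 1 and adjugate entries at most
   (n-1)! b^(n-1), gives |z_i| <= n! n b^n + 1 <= (n b)^n for n >= 3, and the
   claim follows by taking logarithms. *)

Lemma fact_leq_exp_pred m : (m`! <= m ^ m.-1)%N.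
Proof.
elim: m => [//|m IH]; rewrite factS; case: m IH => [//|m] IH.
rewrite expnS leq_mul // (leq_trans IH) //.
by case: m {IH} => // m; rewrite leq_exp2r.
Qed.

Lemma fact_mul_ltn_exp n : (2 < n)%N -> (n`! * n < n ^ n)%N.
Proof.
case: n => [|[|[|k]]] // _.
have lt_fact : (k.+2`! < k.+3 ^ k.+1)%N.
  by rewrite (leq_ltn_trans (fact_leq_exp_pred _)) // ltn_exp2r.
by rewrite factS mulnC 2!expnS !ltn_pmul2l.
Qed.

Lemma sumr_le_const (R : numDomainType) n (F : 'I_n -> R) (c : R) :
  (forall i, F i <= c) -> \sum_i F i <= n%:R * c.
Proof. by move=> F_le; rewrite mulr_natl -[in c *+ n](card_ord n) -sumr_const ler_sum. Qed.

Lemma sqr_sum_le (R : realFieldType) n (a : 'I_n -> R) :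
  (\sum_i a i) ^+ 2 <= n%:R * \sum_i a i ^+ 2.
Proof.
set S1 := \sum_i a i; set S2 := \sum_i a i ^+ 2.
have row_sum i : \sum_j (a i - a j) ^+ 2 = n%:R * a i ^+ 2 - 2%:R * a i * S1 + S2.
  have -> : n%:R * a i ^+ 2 = \sum_(j < n) a i ^+ 2.
    by rewrite sumr_const card_ord mulr_natl.
  rewrite mulr_sumr -sumrB -big_split /=.
  by apply: eq_bigr => j _; ring.
have sum_sqr_diff : \sum_i \sum_j (a i - a j) ^+ 2 = 2%:R * (n%:R * S2 - S1 ^+ 2).
  rewrite (eq_bigr _ (fun i _ => row_sum i)) big_split sumrB /= sumr_const card_ord.
  by rewrite -mulr_suml -!mulr_sumr -/S1 -/S2 -mulr_natr; ring.
have : 0 <= \sum_i \sum_j (a i - a j) ^+ 2.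
  by apply: sumr_ge0 => i _; apply: sumr_ge0 => j _; apply: sqr_ge0.
rewrite sum_sqr_diff pmulr_rge0 ?ltr0n //; lra.
Qed.

Lemma sum_norm_le_of_sum_sqr (R : realFieldType) n (w : 'I_n -> R) (c : R) :
  0 <= c -> \sum_i w i ^+ 2 <= n%:R * c ^+ 2 -> \sum_i `|w i| <= n%:R * c.
Proof.
move=> c_ge0 w_le; rewrite -(ler_pXn2r (n := 2)) ?nnegrE ?mulr_ge0 ?sumr_ge0 //.
apply: le_trans (sqr_sum_le (fun i => `|w i|)) _.
rewrite exprMn expr2 -mulrA ler_wpM2l //.
by rewrite (eq_bigr (fun i => w i ^+ 2)) // => i _; rewrite real_normK ?num_real.
Qed.

Lemma norm_det_le (R : numDomainType) m (M : 'M[R]_m) (B : R) :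
  (forall i j, `|M i j| <= B) -> `|\det M| <= m`!%:R * B ^+ m.
Proof.
move=> M_le; apply: le_trans (ler_norm_sum _ _ _) _.
rewrite mulr_natl -card_Sn -sumr_const; apply: ler_sum => s _.
rewrite normrM normrX normrN1 expr1n mul1r normr_prod -[in B ^+ m](card_ord m) -prodr_const.
by apply: ler_prod => i _; rewrite normr_ge0 M_le.
Qed.

Lemma norm_adj_le (R : numDomainType) m (M : 'M[R]_m) (B : R) :
  (forall i j, `|M i j| <= B) -> forall i j, `|\adj M i j| <= (m.-1)`!%:R * B ^+ m.-1.
Proof.
case: m M => [|m] M M_le i j; first by case: i.
rewrite mxE /cofactor normrM normrX normrN1 expr1n mul1r.
by apply: norm_det_le => k l; rewrite !mxE.
Qed.

Lemma norm_det_mul_le (R : numDomainType) m (M : 'M[R]_m) (B : R) (v : 'cV[R]_m) i :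
  (forall i j, `|M i j| <= B) ->
  `|\det M * v i 0| <= (m.-1)`!%:R * B ^+ m.-1 * \sum_j `|(M *m v) j 0|.
Proof.
move=> M_le.
have -> : \det M * v i 0 = (\adj M *m (M *m v)) i 0.
  by rewrite mulmxA mul_adj_mx mul_scalar_mx mxE.
rewrite mxE mulr_sumr; apply: le_trans (ler_norm_sum _ _ _) _.
apply: ler_sum => j _; rewrite normrM ler_wpM2r //.
exact: norm_adj_le.
Qed.

Lemma ler_dist (R : realType) n (u v x : 'cV[R]_n) :
  (dist u x <= dist v x) =
  (\sum_i (u i 0 - x i 0) ^+ 2 <= \sum_i (v i 0 - x i 0) ^+ 2).
Proof. by rewrite ler_sqrt // sumr_ge0 // => i _; apply: sqr_ge0. Qed.

Lemma log2_le_expnM (R : realType) n (a b x : R) :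
  1 <= a -> 1 <= b -> 0 <= x -> x <= (a * b) ^+ n ->
  log2 x <= n%:R * (log2 a + log2 b).
Proof.
move=> a_ge1 b_ge1 x_ge0 x_le.
have ln2_gt0 : 0 < ln (2 : R) by apply: ln_gt0; lra.
rewrite /log2 -mulrDl mulrA ler_pM2r ?invr_gt0 //.
have [->|x_neq0] := eqVneq x 0; first by rewrite ln0 // mulr_ge0 ?addr_ge0 ?ln_ge0.
have ab_gt0 : 0 < a * b by rewrite mulr_gt0 //; lra.
rewrite mulr_natl -lnM ?posrE; [|lra|lra].
by rewrite -lnXn // ler_ln // posrE ?exprn_gt0 // lt_def x_neq0.
Qed.

Lemma maxabs_ge0 n (A : 'M[int]_n) : 0 <= maxabs A.
Proof. exact: bigmax_ge_id. Qed.

Lemma maxabs_ge1 n (A : 'M[int]_n) : (0 < n)%N -> \det A != 0 -> 1 <= maxabs A.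
Proof.
case: n A => [//|m] M _ detM; rewrite -gtz0_ge1 lt_def maxabs_ge0 andbT.
apply: contraNneq detM => M0; suff -> : M = 0 by rewrite det0.
apply/matrixP => i j; rewrite mxE; apply/normr0_eq0/eqP.
by rewrite eq_le normr_ge0 andbT -M0 (le_bigmax _ _ (i, j)).
Qed.

Section FeasibleBound.

Variables (R : realType) (n : nat) (A : 'M[int]_n).

(* Unqualified, [realmx] would be MathComp's notation for [mxOver Num.real]. *)
Local Notation rA := (Defs.realmx A : 'M[R]_n).
Local Notation B := ((maxabs A)%:~R : R).

Lemma norm_realmx_le i j : `|rA i j| <= B.
Proof. by rewrite mxE -intr_norm ler_int (le_bigmax _ _ (i, j)). Qed.

Lemma norm_in_fund_par_le x : in_fund_par A x -> forall k, `|x k 0| <= n%:R * B.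
Proof.
move=> [y [y01 ->]] k; rewrite mxE; apply: le_trans (ler_norm_sum _ _ _) _.
apply: sumr_le_const => j.
rewrite normrM -[B]mulr1 ler_pM ?norm_realmx_le //.
by have /andP[y_ge0 y_lt1] := y01 j; rewrite ger0_norm // ltW.
Qed.

Lemma norm_det_realmx_ge1 : \det A != 0 -> 1 <= `|\det rA|.
Proof.
move=> detA; rewrite (det_map_mx ( *~%R (1 : R)) A).
by rewrite norm_intr_ge1 ?intr_int // intr_eq0.
Qed.

Lemma latvec0 : latvec A 0 = 0 :> 'cV[R]_n.
Proof. by rewrite /latvec /Defs.realmx map_mx0 mulmx0. Qed.

Lemma feasible_residual_le z : feasible A (latvec (R := R) A z) ->
  exists2 y : 'cV[R]_n, (forall i, 0 <= y i 0 < 1) &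
    \sum_k `|(rA *m (Defs.realmx z - y)) k 0| <= n%:R ^+ 2 * B.
Proof.
move=> [_ [x [[y [y01 x_def]] x_closest]]]; exists y => //.
have B_ge0 : 0 <= B by rewrite ler0z maxabs_ge0.
have -> : rA *m (Defs.realmx z - y) = latvec A z - x by rewrite mulmxBr -x_def.
rewrite expr2 -mulrA sum_norm_le_of_sum_sqr ?mulr_ge0 //.
rewrite (eq_bigr (fun k => (latvec A z k 0 - x k 0) ^+ 2)) => [|k _]; last by rewrite !mxE.
have := x_closest 0; rewrite latvec0 ler_dist => /le_trans -> //.
apply: sumr_le_const => k; rewrite mxE sub0r sqrrN -real_normK ?num_real //.
by rewrite ler_pXn2r ?nnegrE ?mulr_ge0 // norm_in_fund_par_le //; exists y.
Qed.

Lemma feasible_coord_le z i : (2 < n)%N -> \det A != 0 ->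
  feasible A (latvec (R := R) A z) -> (`|z i 0|)%:~R <= (n%:R * B) ^+ n.
Proof.
move=> n_gt2 detA feas; have n_gt0 : (0 < n)%N by apply: ltn_trans n_gt2.
have [y y01 residual_le] := feasible_residual_le feas.
have B_ge1 : 1 <= B by rewrite ler1z maxabs_ge1.
have B_ge0 : 0 <= B := le_trans ler01 B_ge1.
set v := Defs.realmx z - y.
have v_le : `|v i 0| <= n`!%:R * n%:R * B ^+ n.
  have -> : n`!%:R * n%:R * B ^+ n = (n.-1)`!%:R * B ^+ n.-1 * (n%:R ^+ 2 * B).
    have fact_pred : n`!%:R = n%:R * (n.-1)`!%:R :> R.
      by rewrite -natrM -{2}(prednK n_gt0) -factS prednK.
    have B_pred : B ^+ n = B * B ^+ n.-1 by rewrite -exprS prednK.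
    by rewrite fact_pred B_pred; ring.
  apply: le_trans (_ : `|\det rA * v i 0| <= _); first by rewrite normrM ler_peMl ?norm_det_realmx_ge1.
  apply: le_trans (norm_det_mul_le _ _ norm_realmx_le) _.
  by rewrite ler_wpM2l ?mulr_ge0 ?exprn_ge0.
have -> : (`|z i 0|)%:~R = `|v i 0 + y i 0| by rewrite /v !mxE addrNK intr_norm.
have n_pow : (n`! * n + 1)%:R <= n%:R ^+ n :> R.
  by rewrite -natrX ler_nat addn1 fact_mul_ltn_exp.
rewrite exprMn; apply: le_trans (ler_wpM2r (exprn_ge0 _ B_ge0) n_pow).
apply: le_trans (ler_normD _ _) _; rewrite natrD natrM mulrDl mul1r lerD //.
have /andP[y_ge0 y_lt1] := y01 i.
by rewrite ger0_norm // (le_trans (ltW y_lt1)) // exprn_ege1.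
Qed.

End FeasibleBound.

Theorem proposition2p4 (R : realType) (n : nat) (A : 'M[int]_n) (z : 'cV[int]_n) :
  (3 <= n)%N -> \det A != 0 ->
  feasible A (latvec (R:=R) A z) ->
  forall i : 'I_n,
    log2 ((`|z i 0|)%:~R : R) <= n%:R * (log2 (n%:R : R) + log2 ((maxabs A)%:~R : R)).
Proof.
move=> n_ge3 detA feas i; apply: log2_le_expnM.
- by rewrite ler1n (leq_trans _ n_ge3).
- by rewrite ler1z maxabs_ge1 // (leq_trans _ n_ge3).
- by rewrite ler0z normr_ge0.
- exact: feasible_coord_le.
Qed.
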